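(* If a $\star$-metric space $(X,d^\star)$ has a dense subset $M$ (dense in $(X,\mathscr{T}_{d^\star})$) such that $(M,d^\star|_{M\times M})$ is totally bounded, then $(X,d^\star)$ is totally bounded.
   Context: A $t$-definer is a function $\star:[0,\infty)\times[0,\infty)\to[0,\infty)$ such that for all $a,b,c\ge 0$: $a\star b=b\star a$; $a\star(b\star c)=(a\star b)\star c$; if $a\le b$ then $a\star c\le b\star c$; $a\star 0=a$; and $\star$ is continuous in its first variable with respect to the Euclidean topology. Given a nonempty set $X$ and a $t$-definer $\star$, a $\star$-metric on $X$ is a function $d^\star:X\times X\to[0,\infty)$ such that for all $x,y,z\in X$: $d^\star(x,y)=0$ iff $x=y$; $d^\star(x,y)=d^\star(y,x)$; and $d^\star(x,y)\le d^\star(x,z)\star d^\star(z,y)$. Let $\mathscr{T}_{d^\star}$ be the topology consisting of all $U\subseteq X$ such that for each $a\in U$ there is $r>0$ with $\{x: d^\star(a,x)<r\}\subseteq U$. A $\star$-metric space $(Y,\rho)$ is totally bounded if for every $\epsilon>0$ there is a finite $F\subseteq Y$ with $Y=\bigcup_{x\in F}\{y\in Y:\rho(x,y)<\epsilon\}$. *)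

From Stdlib Require Import Reals List.
Open Scope R_scope.

(* A t-definer: a binary operation on [0,oo).  We model it as a function
   R -> R -> R whose axioms are required on nonnegative arguments, and which
   maps [0,oo) x [0,oo) into [0,oo). *)
Definition t_definer (star : R -> R -> R) : Prop :=
  (forall a b, 0 <= a -> 0 <= b -> 0 <= star a b) /\
  (forall a b, 0 <= a -> 0 <= b -> star a b = star b a) /\
  (forall a b c, 0 <= a -> 0 <= b -> 0 <= c ->
      star a (star b c) = star (star a b) c) /\
  (forall a b c, 0 <= a -> 0 <= b -> 0 <= c -> a <= b -> star a c <= star b c) /\
  (forall a, 0 <= a -> star a 0 = a) /\
  (forall c a, 0 <= c -> 0 <= a ->
      forall eps, 0 < eps -> exists delta, 0 < delta /\
        forall a', 0 <= a' -> Rabs (a' - a) < delta ->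
          Rabs (star a' c - star a c) < eps).

Definition star_metric {X : Type} (star : R -> R -> R) (d : X -> X -> R) : Prop :=
  (forall x y, 0 <= d x y) /\
  (forall x y, d x y = 0 <-> x = y) /\
  (forall x y, d x y = d y x) /\
  (forall x y z, d x y <= star (d x z) (d z y)).

Definition d_open {X : Type} (d : X -> X -> R) (U : X -> Prop) : Prop :=
  forall a, U a -> exists r, 0 < r /\ forall x, d a x < r -> U x.

Definition d_closure {X : Type} (d : X -> X -> R) (M : X -> Prop) (x : X) : Prop :=
  forall U, d_open d U -> U x -> exists m, M m /\ U m.

Definition d_dense {X : Type} (d : X -> X -> R) (M : X -> Prop) : Prop :=
  forall x, d_closure d M x.

Definition totally_bounded {Y : Type} (rho : Y -> Y -> R) : Prop :=
  forall eps, 0 < eps -> exists F : list Y,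
    forall y, exists x, In x F /\ rho x y < eps.

Definition restrict_metric {X : Type} (d : X -> X -> R) (M : X -> Prop)
  : {x | M x} -> {x | M x} -> R :=
  fun p q => d (proj1_sig p) (proj1_sig q).

From Stdlib Require Import Reals List Lra.
Open Scope R_scope.

(* Since [0 * c = c] and [*] is continuous and monotone in its first argument,
   [a * c] stays below any bound [e > c] for all small enough [a >= 0].  This
   makes open balls open, so the dense set [M] meets every ball; an [a]-net [F]
   of [M], with [a] chosen so that [a * (eps/2) < eps], is then an [eps]-net of
   [X] by the [*]-triangle inequality through a point of [M] within [eps/2]. *)

Section TDefiner.

Context {star : R -> R -> R}.
Hypothesis Hstar : t_definer star.

Lemma star_0l a : 0 <= a -> star 0 a = a.
Proof.
  pose proof Hstar as (_ & Hcom & _ & _ & H0 & _).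
  intros Ha; rewrite Hcom by lra; exact (H0 a Ha).
Qed.

Lemma star_le2 a a' b b' :
  0 <= a -> 0 <= b -> a <= a' -> b <= b' -> star a b <= star a' b'.
Proof.
  pose proof Hstar as (_ & Hcom & _ & Hmon & _ & _).
  intros Ha Hb Haa' Hbb'.
  apply Rle_trans with (star a' b); [apply Hmon; lra |].
  rewrite (Hcom a' b), (Hcom a' b') by lra.
  apply Hmon; lra.
Qed.

Lemma star_lt_near0 c e :
  0 <= c -> c < e ->
  exists delta, 0 < delta /\ forall a, 0 <= a -> a < delta -> star a c < e.
Proof.
  pose proof Hstar as (_ & _ & _ & _ & _ & Hcont).
  intros Hc Hce.
  destruct (Hcont c 0 Hc (Rle_refl 0) (e - c)) as [delta [Hdelta Hnear]]; [lra |].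
  exists delta; split; [exact Hdelta |].
  intros a Ha Haδ.
  assert (Hdist : Rabs (a - 0) < delta) by (rewrite Rminus_0_r, Rabs_pos_eq; lra).
  pose proof (Hnear a Ha Hdist) as Hclose.
  rewrite star_0l in Hclose by exact Hc.
  apply Rabs_def2 in Hclose; lra.
Qed.

End TDefiner.

Section StarMetric.

Context {X : Type} {star : R -> R -> R} {d : X -> X -> R}.
Hypothesis Hstar : t_definer star.
Hypothesis Hd : star_metric star d.

Lemma star_metric_le x y z a b :
  d x z <= a -> d z y <= b -> d x y <= star a b.
Proof.
  pose proof Hd as (Dpos & _ & _ & Dtri).
  intros Ha Hb.
  apply Rle_trans with (star (d x z) (d z y)); [apply Dtri |].
  apply (star_le2 Hstar); auto.
Qed.

Lemma d_open_ball x r : d_open d (fun y => d x y < r).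
Proof.
  pose proof Hd as (Dpos & _ & _ & _).
  intros b Hb.
  destruct (star_lt_near0 Hstar (d x b) r (Dpos x b) Hb) as [delta [Hdelta Hsmall]].
  exists delta; split; [exact Hdelta |].
  intros y Hy.
  apply Rle_lt_trans with (star (d x b) (d b y)).
  - apply star_metric_le with b; lra.
  - pose proof Hstar as (_ & Hcom & _).
    rewrite Hcom by apply Dpos.
    apply Hsmall; [apply Dpos | exact Hy].
Qed.

Lemma d_dense_ball (M : X -> Prop) x r :
  d_dense d M -> 0 < r -> exists m, M m /\ d x m < r.
Proof.
  pose proof Hd as (_ & Deq & _).
  intros Hdense Hr.
  apply (Hdense x (fun y => d x y < r)); [apply d_open_ball |].
  simpl; rewrite (proj2 (Deq x x) eq_refl); exact Hr.
Qed.

End StarMetric.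

Theorem corollary3p6 (X : Type) (star : R -> R -> R) (d : X -> X -> R)
  (M : X -> Prop) :
  inhabited X ->
  t_definer star ->
  star_metric star d ->
  d_dense d M ->
  totally_bounded (restrict_metric d M) ->
  totally_bounded d.
Proof.
  intros _ Hstar Hd Hdense Htb eps Heps.
  destruct (star_lt_near0 Hstar (eps / 2) eps) as [delta [Hdelta Hsmall]]; [lra .. |].
  destruct (Htb (delta / 2)) as [F HF]; [lra |].
  exists (map (@proj1_sig X M) F).
  intros x.
  destruct (d_dense_ball Hstar Hd M x (eps / 2) Hdense) as [m [Mm Hxm]]; [lra |].
  destruct (HF (exist M m Mm)) as [[f Mf] [Hin Hfm]].
  unfold restrict_metric in Hfm; simpl in Hfm.
  exists f; split.
  - exact (in_map (@proj1_sig X M) F (exist M f Mf) Hin).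
  - apply Rle_lt_trans with (star (delta / 2) (eps / 2)).
    + pose proof Hd as (_ & _ & Dsym & _).
      apply (star_metric_le Hstar Hd) with m; [lra | rewrite Dsym; lra].
    + apply Hsmall; lra.
Qed.
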